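(* Fix a task index $t\in\{1,2,\dots\}$ with input dimension $M_t$, output dimension $C_t$, compact domain $D_t\subset\mathbb{R}^{M_t}$, and target function $f=[f_1,\dots,f_{C_t}]\in L_2(D_t)$. Suppose that $\mathrm{span}(\Gamma)$ is dense in $L_2$ space and that, for all $g\in\Gamma$, $G$ is a collection of some $g$ with nonlinear activation. Let $0<r(t)<1$ and let $\{\mu_L(t)\}_{L\ge 1}$ be a non-negative real sequence with $\lim_{L\to+\infty}\mu_L(t)=0$ and $\mu_L(t)\le 1-r(t)$ for all $L$. Let $l\in\mathbb{N}^+$ be a step size. Nodes $g_1,g_2,\dots\in\Gamma$ are added to the network in batches of $l$; for $L=1,2,\dots$ (with $L$ running over the batch endpoints) set $$\delta_L^\star(t)=\sum_{c=1}^{C_t}\delta_{L,c}^\star(t),\qquad \delta_{L,c}^\star(t)=(1-r(t)-\mu_L(t))\,\|e_{L-l,c}^\star(t)\|^2 .$$ Suppose that each new batch of nodes $G_l=[g_{L-l+1},\dots,g_L]$ (with $g_j(x)=g(xw_j+b_j)$, i.e. $G_l=G_l(X_tW_l+B_l)$ with randomly generated weights $W_l$ and biases $B_l$) is chosen so that $$\langle e_{L-l,c}^\star(t),\,G_l\beta_{l,c}(t)\rangle\ \ge\ \delta_{L,c}^\star(t),\qquad c=1,2,\dots,C_t,$$ and is connected to the existing network through output weights determined in the least-squares sense $$[\beta_1^\star(t),\dots,\beta_L^\star(t)]=\arg\min_{\beta(t)}\Big\|f-\sum_{j=1}^{L}\beta_j(t)g_j\Big\|.$$ Then $\lim_{L\to+\infty}\|f-f_L^\star\|=0$,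 where $f_L^\star=f_{L-l}^\star+\beta_l^\star(t)G_l=\sum_{j=1}^L\beta_j^\star(t)g_j$.
   Context: $\Gamma=\{g_1,g_2,\dots\}$ is a set of bounded nonconstant piecewise continuous functions and $\mathrm{span}(\Gamma)$ is the function space spanned by $\Gamma$. $L_2(D_t)$ is the space of Lebesgue measurable $f=[f_1,\dots,f_{C_t}]:\mathbb{R}^{M_t}\to\mathbb{R}^{C_t}$ on $D_t$ with norm $\|f\|=\big(\sum_{c=1}^{C_t}\int_{D_t}|f_c(x)|^2dx\big)^{1/2}<\infty$, and inner product $\langle f,\vartheta\rangle=\sum_{c=1}^{C_t}\langle f_c,\vartheta_c\rangle=\sum_{c=1}^{C_t}\int_{D_t}f_c(x)\vartheta_c(x)\,dx$; for scalar-valued functions the inner product is $\int_{D_t}f_c\vartheta_c\,dx$. Each output weight $\beta_j(t)\in\mathbb{R}^{1\times C_t}$ is a row vector, so $\beta_j(t)g_j$ is $\mathbb{R}^{C_t}$-valued. The optimal residual after $L$ nodes is $e_L^\star(t)=f-\sum_{j=1}^L\beta_j^\star(t)g_j$ with $e_0^\star(t)=f$, and $e_{L,c}^\star(t)$ denotes its $c$-th component. For the batch $G_l=[g_{L-l+1},\dots,g_L]$ and a coefficient vector $\beta=(\beta_{L-l+1},\dots,\beta_L)^{\mathrm T}\in\mathbb{R}^l$, $G_l\beta=\sum_{j=L-l+1}^{L}\beta_jg_j$. The intermediate output weights are $\beta_{l,c}(t)=(G_l^{\mathrm T}G_l)^\dagger G_l^{\mathrm T}e_{L-l,c}^\star(t)$,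 i.e. the least-squares coefficients of $e_{L-l,c}^\star(t)$ on $g_{L-l+1},\dots,g_L$, where $G_l^{\mathrm T}G_l$ is the Gram matrix $(\langle g_i,g_j\rangle)_{i,j}$, $G_l^{\mathrm T}e$ is the vector $(\langle g_j,e\rangle)_j$, and $^\dagger$ denotes the Moore–Penrose pseudoinverse. *)

From mathcomp Require Import all_boot all_order all_algebra.
From mathcomp Require Import all_classical all_reals all_analysis.
Import Order.TTheory GRing.Theory Num.Theory numFieldNormedType.Exports.

Set Implicit Arguments.
Unset Strict Implicit.
Unset Printing Implicit Defensive.

Local Open Scope classical_set_scope.
Local Open Scope ring_scope.

(* Points of R^M are represented as M.-tuple R, which MathComp-Analysis equips
   with the product (Borel) sigma-algebra generated by the coordinates.
   The topology of R^M is taken from 'rV[R]_M via the coordinate bijection. *)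

Definition torow (R : realType) (M : nat) (x : M.-tuple R) : 'rV[R]_M :=
  \row_i tnth x i.

Definition fromrow (R : realType) (M : nat) (v : 'rV[R]_M) : M.-tuple R :=
  [tuple v ord0 i | i < M].

Definition is_lebesgue_Rn (R : realType) (M : nat)
    (mu : {measure set (M.-tuple R) -> \bar R}) : Prop :=
  forall a b : M.-tuple R, (forall i, tnth a i <= tnth b i) ->
    mu [set x | forall i, tnth a i <= tnth x i <= tnth b i] =
    (\prod_(i < M) (tnth b i - tnth a i))%:E.

Definition Rn_compact (R : realType) (M : nat) (D : set (M.-tuple R)) : Prop :=
  compact (@torow R M @` D).

Definition bounded_Rn (R : realType) (M : nat) (h : M.-tuple R -> R) : Prop :=
  exists K : R, forall x, `|h x| <= K.

Definition nonconstant_Rn (R : realType) (M : nat) (h : M.-tuple R -> R) : Prop :=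
  exists x y, h x <> h y.

Definition piecewise_continuous_Rn (R : realType) (M : nat)
    (h : M.-tuple R -> R) : Prop :=
  exists (n : nat) (P : 'I_n -> set (M.-tuple R)),
    (forall i, measurable (P i)) /\
    (forall x, exists i, P i x) /\
    (forall i, {within @torow R M @` P i, continuous (h \o @fromrow R M)}).

Definition admissible_Gamma (R : realType) (M : nat)
    (Gamma : set (M.-tuple R -> R)) : Prop :=
  forall h, Gamma h ->
    [/\ bounded_Rn h, nonconstant_Rn h & piecewise_continuous_Rn h].

Definition isL2 (R : realType) (M : nat)
    (mu : {measure set (M.-tuple R) -> \bar R}) (D : set (M.-tuple R))
    (h : M.-tuple R -> R) : Prop :=
  measurable_fun D h /\ (\int[mu]_(x in D) ((h x) ^+ 2)%:E < +oo)%E.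

Definition ip (R : realType) (M : nat)
    (mu : {measure set (M.-tuple R) -> \bar R}) (D : set (M.-tuple R))
    (h k : M.-tuple R -> R) : R :=
  Rintegral mu D (fun x => h x * k x).

Definition nsq (R : realType) (M : nat)
    (mu : {measure set (M.-tuple R) -> \bar R}) (D : set (M.-tuple R))
    (h : M.-tuple R -> R) : R := ip mu D h h.

Definition vnorm (R : realType) (M C : nat)
    (mu : {measure set (M.-tuple R) -> \bar R}) (D : set (M.-tuple R))
    (F : 'I_C -> M.-tuple R -> R) : R :=
  Num.sqrt (\sum_(c < C) nsq mu D (F c)).

Definition span_dense (R : realType) (M : nat)
    (mu : {measure set (M.-tuple R) -> \bar R}) (D : set (M.-tuple R))
    (Gamma : set (M.-tuple R -> R)) : Prop :=
  forall h, isL2 mu D h -> forall eps : R, 0 < eps ->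
    exists (n : nat) (a : 'I_n -> R) (gs : 'I_n -> M.-tuple R -> R),
      (forall i, Gamma (gs i)) /\
      Num.sqrt (nsq mu D (fun x => h x - \sum_(i < n) a i * gs i x)) < eps.

Definition resid (R : realType) (M C : nat)
    (f : 'I_C -> M.-tuple R -> R) (g : nat -> M.-tuple R -> R) (L : nat)
    (beta : nat -> 'rV[R]_C) : 'I_C -> M.-tuple R -> R :=
  fun c x => f c x - \sum_(1 <= j < L.+1) beta j ord0 c * g j x.

Definition is_MP_pinv (R : realType) (n : nat) (A X : 'M[R]_n) : Prop :=
  [/\ A *m X *m A = A, X *m A *m X = X,
      (A *m X)^T = A *m X & (X *m A)^T = X *m A].

Definition gram (R : realType) (M : nat)
    (mu : {measure set (M.-tuple R) -> \bar R}) (D : set (M.-tuple R))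
    (g : nat -> M.-tuple R -> R) (L l : nat) : 'M[R]_l :=
  \matrix_(i < l, j < l) ip mu D (g (L - l + i.+1)%N) (g (L - l + j.+1)%N).

Definition gtv (R : realType) (M : nat)
    (mu : {measure set (M.-tuple R) -> \bar R}) (D : set (M.-tuple R))
    (g : nat -> M.-tuple R -> R) (L l : nat) (e : M.-tuple R -> R) : 'cV[R]_l :=
  \col_(i < l) ip mu D (g (L - l + i.+1)%N) e.

Definition batch_comb (R : realType) (M : nat)
    (g : nat -> M.-tuple R -> R) (L l : nat) (b : 'cV[R]_l) : M.-tuple R -> R :=
  fun x => \sum_(i < l) b i ord0 * g (L - l + i.+1)%N x.

From mathcomp Require Import all_boot all_order all_algebra.
From mathcomp Require Import all_classical all_reals all_analysis.
From mathcomp Require Import ring lra zify measurable_realfun.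
Import Order.TTheory GRing.Theory Num.Theory numFieldNormedType.Exports.
Set Implicit Arguments.
Unset Strict Implicit.
Unset Printing Implicit Defensive.
Local Open Scope classical_set_scope.
Local Open Scope ring_scope.

(* Fix an output c, let e be the optimal residual before the batch G_l is added and
   h = G_l beta_{l,c} the fit of e by the batch.  Since beta_{l,c} comes from the
   Moore-Penrose inverse of the Gram matrix, h is the orthogonal projection of e onto
   the batch, so ||e - h||^2 = ||e||^2 - <e, h> <= (r + mu_L) ||e||^2 by the supervisory
   inequality.  Keeping the old output weights and adding beta_{l,c} is one candidate
   of the least-squares problem with L nodes, hence the squared residual norms a_k
   after k batches satisfy a_{k+1} <= (r + mu_{(k+1)l}) a_k, and since r < 1 and
   mu_L -> 0 they decay geometrically.  The inner products are honest integrals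
   because a compact D has finite Lebesgue measure and every g in Gamma is bounded
   and, being piecewise continuous, measurable. *)

Section tuple_measurability.
Variables (R : realType) (M : nat).

Lemma measurable_tuple_box (I : 'I_M -> interval R) :
  measurable [set y : M.-tuple R | forall i, tnth y i \in I i].
Proof.
have -> : [set y : M.-tuple R | forall i, tnth y i \in I i] =
    \bigcap_(i in [set: 'I_M]) ((@tnth M R)^~ i @^-1` [set` I i]).
  by apply/seteqP; split => y /= yI i; [move=> _|]; apply: yI.
apply: fin_bigcap_measurable => // i _; rewrite -[X in measurable X]setTI.
exact: (measurable_tnth i measurableT (measurable_itv (I i))).
Qed.

Lemma fromrowK : cancel (@torow R M) (@fromrow R M).
Proof. by move=> x; apply: eq_from_tnth => i; rewrite tnth_mktuple mxE. Qed.

Definition rat_box (q : {ffun 'I_M -> rat * rat}) : set (M.-tuple R) :=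
  [set y | forall i, tnth y i \in `]ratr (q i).1, ratr (q i).2[].

Lemma rat_box_ball (x : M.-tuple R) (e : R) : 0 < e ->
  exists q, rat_box q x /\ rat_box q `<=` [set y | ball (torow x) e (torow y)].
Proof.
move=> e0.
have qP i : exists qi : rat * rat,
    tnth x i - e < ratr qi.1 < tnth x i /\ tnth x i < ratr qi.2 < tnth x i + e.
  have [q1] := @rat_in_itvoo R (tnth x i - e) (tnth x i) ltac:(lra).
  have [q2] := @rat_in_itvoo R (tnth x i) (tnth x i + e) ltac:(lra).
  by rewrite !in_itv /= => ? ?; exists (q1, q2).
have [qf {}qP] := choice qP.
exists [ffun i => qf i]; split=> [i|y yq].
  by rewrite ffunE in_itv /=; have [/andP[_ ->] /andP[-> _]] := qP i.
split => // i j; rewrite !mxE /ball /= ltr_norml.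
have := yq j; rewrite ffunE in_itv /= => /andP[? ?].
have [/andP[? ?] /andP[? ?]] := qP j; apply/andP; split; lra.
Qed.

Lemma continuous_within_measurable_fun (P : set (M.-tuple R)) (h : M.-tuple R -> R) :
  measurable P -> {within @torow R M @` P, continuous (h \o @fromrow R M)} ->
  measurable_fun P h.
Proof.
move=> mP ch.
apply: (measurability _ (RGenOpens.measurableE R)) => _ [_ [a [b ->]] <-].
(* By continuity, P `&` h @^-1` ]a, b[ is covered by the countably many rational
   boxes on which h stays in ]a, b[. *)
pose F q := if pselect (P `&` rat_box q `<=` h @^-1` `]a, b[) then rat_box q else set0.
have -> : P `&` h @^-1` `]a, b[ = P `&` \bigcup_q F q.
  apply/seteqP; split => x /= [Px hx]; split => //; last first.
    by case: hx => q _; rewrite /F; case: pselect => // qh /(conj Px)/qh.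
  have /(_ `]a, b[%classic) := (subspace_continuousP _ _).1 ch (torow x) (ex_intro2 _ _ x Px erefl).
  have hab : nbhs ((h \o @fromrow R M) (torow x)) `]a, b[%classic.
    by apply: open_nbhs_nbhs; split; [exact: interval_open|rewrite /= fromrowK].
  move=> /(_ hab); rewrite nbhs_simpl /= => /nbhs_ballP [e /= e0 eh].
  have [q [xq qe]] := rat_box_ball x e0.
  exists q => //; rewrite /F; case: pselect => // -[] y [Py yq].
  have := eh (torow y).
  by rewrite /from_subspace /= fromrowK; apply; [exact: qe|exists y].
apply: measurableI => //; apply: countable_bigcupT_measurable; first exact: countableP.
by move=> q; rewrite /F; case: pselect => qh; [exact: measurable_tuple_box|exact: measurable0].
Qed.

Lemma piecewise_continuous_measurable (h : M.-tuple R -> R) :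
  piecewise_continuous_Rn h -> measurable_fun [set: M.-tuple R] h.
Proof.
move=> [n [P [mP [cover cont]]]] _ B mB; rewrite setTI.
have -> : h @^-1` B = \bigcup_i (P i `&` h @^-1` B).
  apply/seteqP; split => [x hx|x [i _ []//]].
  by have [i Pi] := cover x; exists i.
apply: countable_bigcupT_measurable; first exact: countableP.
by move=> i; exact: continuous_within_measurable_fun (mP i) (cont i) (mP i) _ mB.
Qed.

Lemma norm_tnth_le_torow (x : M.-tuple R) i : `|tnth x i| <= `|torow x|.
Proof.
have -> : tnth x i = torow x ord0 i by rewrite mxE.
by rewrite [`|torow x|]mx_normrE; exact: (le_bigmax _ _ (ord0, i)).
Qed.

Lemma lebesgue_compact_lty (mu : {measure set (M.-tuple R) -> \bar R})
    (D : set (M.-tuple R)) :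
  is_lebesgue_Rn mu -> Rn_compact D -> measurable D -> (mu D < +oo)%E.
Proof.
move=> leb cD mD; have [K [_ DK]] := compact_bounded cD.
set c := `|K| + 1.
have /DK Dc : K < c by apply: le_lt_trans (ler_norm K) _; rewrite ltrDl.
pose a : M.-tuple R := [tuple - c | i < M]; pose b : M.-tuple R := [tuple c | i < M].
have ab i : tnth a i <= tnth b i.
  by rewrite !tnth_mktuple; have := normr_ge0 K; rewrite /c; lra.
set cube := [set x | forall i, tnth a i <= tnth x i <= tnth b i].
have mcube : measurable cube.
  rewrite (_ : cube = [set x | forall i, tnth x i \in `[tnth a i, tnth b i]]).
    exact: measurable_tuple_box.
  by apply/seteqP; split => x /= xab i; move: (xab i); rewrite in_itv.
apply: (@le_lt_trans _ _ (mu cube)); last by rewrite leb // ltry.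
apply: le_measure; rewrite ?inE // => x Dx i; rewrite !tnth_mktuple -ler_norml.
exact: le_trans (norm_tnth_le_torow x i) (Dc _ (ex_intro2 _ _ x Dx erefl)).
Qed.

End tuple_measurability.

Section square_integrable.
Context d (T : measurableType d) (R : realType) (mu : {measure set T -> \bar R}).
Variables (D : set T) (mD : measurable D).

Definition L2 (u : T -> R) :=
  measurable_fun D u /\ mu.-integrable D (EFin \o (fun x => u x ^+ 2)).

Lemma L2_0 : L2 (fun _ => 0).
Proof.
split; first exact: measurable_cst.
by apply: eq_integrable (integrable0 mu D) => // x _ /=; rewrite expr0n.
Qed.

Lemma L2Z (c : R) u : L2 u -> L2 (fun x => c * u x).
Proof.
move=> [mu_ iu]; split; first exact: measurable_funM.
by apply: eq_integrable (integrableZl mD (c ^+ 2) iu) => // x _ /=; rewrite exprMn.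
Qed.

Lemma L2D u v : L2 u -> L2 v -> L2 (fun x => u x + v x).
Proof.
move=> [mu_ iu] [mv iv]; split; first exact: measurable_funD.
have iuv : mu.-integrable D (EFin \o (fun x => 2 * u x ^+ 2 + 2 * v x ^+ 2)).
  exact: eq_integrable (integrableD mD (integrableZl mD 2 iu) (integrableZl mD 2 iv)).
apply: le_integrable iuv => //.
  by apply/measurable_EFinP; apply/measurable_funX/measurable_funD.
move=> x _ /=; rewrite lee_fin !ger0_norm ?sqr_ge0 //; last first.
  by rewrite addr_ge0 // mulr_ge0 // sqr_ge0.
by have := sqr_ge0 (u x - v x); rewrite !expr2; nra.
Qed.

Lemma L2B u v : L2 u -> L2 v -> L2 (fun x => u x - v x).
Proof.
move=> Lu /(L2Z (-1)) /(L2D Lu).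
by under eq_fun do rewrite mulN1r.
Qed.

Lemma L2_sum (I : eqType) (s : seq I) (a : I -> R) (F : I -> T -> R) :
  {in s, forall i, L2 (F i)} -> L2 (fun x => \sum_(i <- s) a i * F i x).
Proof.
elim: s => [|i s IH] Fs.
  by under eq_fun do rewrite big_nil; exact: L2_0.
under eq_fun do rewrite big_cons.
apply: L2D; first by apply/L2Z/Fs; rewrite mem_head.
by apply: IH => j js; apply: Fs; rewrite in_cons js orbT.
Qed.

Lemma L2_integrableM u v : L2 u -> L2 v ->
  mu.-integrable D (EFin \o (fun x => u x * v x)).
Proof.
move=> [mu_ iu] [mv iv].
apply: le_integrable (integrableD mD iu iv) => //.
  by apply/measurable_EFinP; apply: measurable_funM.
move=> x _ /=; rewrite lee_fin [X in _ <= X]ger0_norm ?addr_ge0 ?sqr_ge0 //.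
by rewrite ler_norml; apply/andP; split; nra.
Qed.

Lemma bounded_L2 (u : T -> R) (K : R) :
  (mu D < +oo)%E -> measurable_fun D u -> (forall x, `|u x| <= K) -> L2 u.
Proof.
move=> Dfin mu_ uK; split => //; apply/integrableP; split.
  by apply/measurable_EFinP; apply: measurable_funX.
apply: (@le_lt_trans _ _ (\int[mu]_(x in D) (K ^+ 2)%:E)%E).
  apply: ge0_le_integral => //.
  - by apply/measurableT_comp/measurable_EFinP => //; apply: measurable_funX.
  - move=> x _ /=; rewrite lee_fin ger0_norm ?sqr_ge0 // -real_normK ?num_real //.
    by rewrite lerXn2r ?nnegrE ?(le_trans _ (uK x)).
by rewrite integral_cst //= lte_mul_pinfty // lee_fin sqr_ge0.
Qed.

End square_integrable.

Section inner_product.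
Variables (R : realType) (M : nat) (mu : {measure set (M.-tuple R) -> \bar R}).
Variables (D : set (M.-tuple R)) (mD : measurable D).
Local Notation L2 := (L2 mu D).
Local Notation ip := (ip mu D).

Lemma isL2_L2 u : isL2 mu D u -> L2 u.
Proof.
move=> [mu_ u2]; split => //; apply/integrableP; split.
  by apply/measurable_EFinP; apply: measurable_funX.
apply: le_lt_trans u2; apply: ge0_le_integral => //.
- by apply/measurableT_comp/measurable_EFinP => //; apply: measurable_funX.
- by apply/measurable_EFinP; apply: measurable_funX.
- by move=> x _ /=; rewrite ger0_norm ?sqr_ge0.
Qed.

Lemma admissible_L2 (Gamma : set (M.-tuple R -> R)) h :
  (mu D < +oo)%E -> admissible_Gamma Gamma -> Gamma h -> L2 h.
Proof.
move=> Dfin /[apply] -[[K hK] _ /piecewise_continuous_measurable mh].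
exact: (bounded_L2 mD Dfin (measurable_funS measurableT _ mh) hK).
Qed.

Lemma ip_sym u v : ip u v = ip v u.
Proof. by rewrite /ip; under eq_Rintegral do rewrite mulrC. Qed.

Lemma ipDl u v w : L2 u -> L2 v -> L2 w ->
  ip (fun x => u x + v x) w = ip u w + ip v w.
Proof.
move=> Lu Lv Lw; rewrite /ip; under eq_Rintegral do rewrite mulrDl.
by rewrite RintegralD //; apply: L2_integrableM.
Qed.

Lemma ipBl u v w : L2 u -> L2 v -> L2 w ->
  ip (fun x => u x - v x) w = ip u w - ip v w.
Proof.
move=> Lu Lv Lw; rewrite /ip; under eq_Rintegral do rewrite mulrBl.
by rewrite RintegralB //; apply: L2_integrableM.
Qed.

Lemma ipZl c u w : L2 u -> L2 w -> ip (fun x => c * u x) w = c * ip u w.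
Proof.
move=> Lu Lw; rewrite /ip; under eq_Rintegral do rewrite -mulrA.
by rewrite RintegralZl //; apply: L2_integrableM.
Qed.

Lemma ip0l w : ip (fun _ => 0) w = 0.
Proof.
by rewrite /ip; under eq_Rintegral do rewrite mul0r; rewrite Rintegral_cst // mul0r.
Qed.

Lemma ip_suml (I : eqType) (s : seq I) (a : I -> R) (F : I -> M.-tuple R -> R) w :
  {in s, forall i, L2 (F i)} -> L2 w ->
  ip (fun x => \sum_(i <- s) a i * F i x) w = \sum_(i <- s) a i * ip (F i) w.
Proof.
elim: s => [|i s IH] Fs Lw.
  by rewrite big_nil; under eq_fun do rewrite big_nil; exact: ip0l.
have Fi : L2 (F i) by apply: Fs; rewrite mem_head.
have {}Fs : {in s, forall j, L2 (F j)} by move=> j js; apply: Fs; rewrite in_cons js orbT.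
rewrite big_cons; under eq_fun do rewrite big_cons.
by rewrite ipDl ?ipZl ?IH //; [exact: L2Z | exact: L2_sum].
Qed.

Lemma nsq_ge0 u : 0 <= nsq mu D u.
Proof. by apply: Rintegral_ge0 => x _; rewrite -expr2 sqr_ge0. Qed.

End inner_product.

Section moore_penrose.
Variables (R : realType) (n : nat).
Implicit Types A X Y : 'M[R]_n.

Lemma MP_pinv_uniq A X Y : is_MP_pinv A X -> is_MP_pinv A Y -> X = Y.
Proof.
move=> [AXA XAX AX XA] [AYA YAY AY YA].
have XAY_X : X = X *m A *m Y.
  have AT : A^T = A^T *m (A *m Y) by rewrite -{1}AYA trmx_mul AY.
  rewrite -{1}XAX -mulmxA -{1}AX trmx_mul AT [X^T *m _]mulmxA -trmx_mul AX.
  by rewrite !mulmxA XAX.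
have XAY_Y : Y = X *m A *m Y.
  have AT : A^T = X *m A *m A^T by rewrite -{1}AXA -mulmxA trmx_mul XA.
  rewrite -{1}YAY -{1}YA trmx_mul AT -!mulmxA [A^T *m _]mulmxA -trmx_mul YA.
  by rewrite YAY.
by rewrite XAY_X -XAY_Y.
Qed.

Lemma MP_pinv_sym A X : A^T = A -> is_MP_pinv A X -> X^T = X.
Proof.
move=> AT [AXA XAX AX XA]; apply: (@MP_pinv_uniq A) => //; split.
- by have := congr1 trmx AXA; rewrite !trmx_mul AT mulmxA.
- by have := congr1 trmx XAX; rewrite !trmx_mul AT mulmxA.
- have AXT : A *m X^T = X *m A by rewrite -XA trmx_mul AT.
  by rewrite AXT XA.
- have XTA : X^T *m A = A *m X by rewrite -AX trmx_mul AT.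
  by rewrite XTA AX.
Qed.

Lemma MP_pinv_quad A X (v : 'cV[R]_n) : A^T = A -> is_MP_pinv A X ->
  (X *m v)^T *m A *m (X *m v) = (X *m v)^T *m v.
Proof.
move=> AT XP; have XT := MP_pinv_sym AT XP; case: XP => _ XAX _ _.
by rewrite trmx_mul XT !mulmxA -(mulmxA (v^T *m X) A X) -(mulmxA v^T X) (mulmxA X A X) XAX.
Qed.

End moore_penrose.

Section batch_projection.
Variables (R : realType) (M : nat) (mu : {measure set (M.-tuple R) -> \bar R}).
Variables (D : set (M.-tuple R)) (mD : measurable D).
Variables (g : nat -> M.-tuple R -> R) (L l : nat).
Hypothesis gL2 : forall i : 'I_l, L2 mu D (g (L - l + i.+1)%N).
Local Notation gram := (gram mu D g L l).
Local Notation gtv := (gtv mu D g L l).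
Local Notation batch_comb := (@batch_comb R M g L l).

Lemma gram_sym : gram^T = gram.
Proof. by apply/matrixP => i j; rewrite !mxE ip_sym. Qed.

Lemma L2_batch_comb b : L2 mu D (batch_comb b).
Proof. by apply: (L2_sum mD) => i _. Qed.

Lemma ip_batch_combl b w : L2 mu D w ->
  ip mu D (batch_comb b) w = (b^T *m gtv w) ord0 ord0.
Proof.
move=> Lw; rewrite /batch_comb (ip_suml mD) // !mxE.
by apply: eq_bigr => i _; rewrite !mxE.
Qed.

Lemma gtv_batch_comb b : gtv (batch_comb b) = gram *m b.
Proof.
apply/matrixP => i j; rewrite ord1 !mxE ip_sym ip_batch_combl // !mxE.
by apply: eq_bigr => k _; rewrite !mxE ip_sym mulrC.
Qed.

Lemma nsq_batch_comb b : nsq mu D (batch_comb b) = (b^T *m gram *m b) ord0 ord0.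
Proof. by rewrite /nsq ip_batch_combl ?gtv_batch_comb ?mulmxA //; exact: L2_batch_comb. Qed.

(* The Penrose equations make G_l (X G_l^T e) the orthogonal projection of e onto
   the batch. *)
Lemma nsq_sub_batch_proj e X : L2 mu D e -> is_MP_pinv gram X ->
  let h := batch_comb (X *m gtv e) in
  nsq mu D (fun x => e x - h x) = nsq mu D e - ip mu D e h.
Proof.
move=> Le XP h; have Lh : L2 mu D h := L2_batch_comb _.
have hh : nsq mu D h = ip mu D e h.
  by rewrite nsq_batch_comb (MP_pinv_quad _ gram_sym XP) ip_sym ip_batch_combl.
have Leh : L2 mu D (fun x => e x - h x) by apply: L2B.
rewrite /nsq ipBl // [ip _ _ e _]ip_sym [ip _ _ h _]ip_sym !ipBl //.
by rewrite (ip_sym _ _ h e) -/(nsq mu D h) hh; ring.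
Qed.

End batch_projection.

Section batch_contraction.
Variables (R : realType) (M C : nat) (mu : {measure set (M.-tuple R) -> \bar R}).
Variables (D : set (M.-tuple R)) (mD : measurable D).
Variables (f : 'I_C -> M.-tuple R -> R) (g : nat -> M.-tuple R -> R).

Definition append_batch (m l : nat) (beta : nat -> 'rV[R]_C) (b : 'I_C -> 'cV[R]_l) :
    nat -> 'rV[R]_C :=
  fun j => if (j <= m)%N then beta j
           else \row_c odflt 0 (omap (fun i : 'I_l => b c i ord0) (insub (j - m.+1)%N)).

Lemma resid_append_batch m l beta b c :
  resid f g (m + l) (append_batch m beta b) c =
  (fun x => resid f g m beta c x - @batch_comb R M g (m + l) l (b c) x).
Proof.
apply/funext => x; rewrite /resid /batch_comb (@big_cat_nat _ _ _ m.+1) //=; last lia.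
rewrite (eq_big_nat _ _ (F2 := fun j => beta j ord0 c * g j x)); last first.
  by move=> j /andP[_ jm]; rewrite /append_batch ifT.
have -> : \sum_(m.+1 <= j < (m + l).+1) append_batch m beta b j ord0 c * g j x =
          \sum_(i < l) b c i ord0 * g (m + l - l + i.+1)%N x.
  rewrite -{1}(add0n m.+1) big_addn subSS addKn big_mkord.
  apply: eq_bigr => i _; rewrite /append_batch ifF; last lia.
  by rewrite mxE addnK valK /=; congr (_ * g _ x); lia.
by rewrite opprD addrA.
Qed.

Hypotheses (fL2 : forall c, L2 mu D (f c)) (gL2 : forall j, (0 < j)%N -> L2 mu D (g j)).

Lemma L2_resid L beta c : L2 mu D (resid f g L beta c).
Proof.
apply: (L2B mD (fL2 c)); apply: (L2_sum mD) => j.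
by rewrite mem_index_iota => /andP[j_gt0 _]; exact: gL2.
Qed.

(* Least squares does at least as well as keeping beta and fitting the new batch
   to the old residual. *)
Lemma lsq_batch_contraction m l (beta betaL : nat -> 'rV[R]_C) (s : R) :
  (forall beta', vnorm mu D (resid f g (m + l) betaL)
                 <= vnorm mu D (resid f g (m + l) beta')) ->
  (forall c, let e := resid f g m beta c in
     exists X, is_MP_pinv (gram mu D g (m + l) l) X /\
       (1 - s) * nsq mu D e
         <= ip mu D e (@batch_comb R M g (m + l) l (X *m gtv mu D g (m + l) l e))) ->
  \sum_(c < C) nsq mu D (resid f g (m + l) betaL c)
    <= s * \sum_(c < C) nsq mu D (resid f g m beta c).
Proof.
move=> lsq /choice [X XP].
pose b c := X c *m gtv mu D g (m + l) l (resid f g m beta c).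
have := lsq (append_batch m beta b); rewrite /vnorm ler_sqrt; last first.
  by apply: sumr_ge0 => c _; exact: nsq_ge0.
move/le_trans; apply; rewrite mulr_sumr; apply: ler_sum => c _.
have gbL2 (i : 'I_l) : L2 mu D (g (m + l - l + i.+1)%N) by apply: gL2; lia.
rewrite resid_append_batch (nsq_sub_batch_proj mD gbL2 (L2_resid _ _ _) (XP c).1).
by have := (XP c).2; lra.
Qed.

End batch_contraction.

Lemma contraction_cvg0 (R : realType) (a s : R^nat) (r : R) :
  0 <= r -> r < 1 -> (forall k, 0 <= a k) -> s @ \oo --> 0 ->
  (forall k, a k.+1 <= (r + s k.+1) * a k) -> a @ \oo --> 0.
Proof.
move=> r0 r1 a0 s0 step.
pose q := (1 + r) / 2.
have q0 : 0 <= q by rewrite /q; lra.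
have [N _ sN] : \forall k \near \oo, s k <= (1 - r) / 2.
  by apply: (cvgr_le 0) => //; lra.
have geo n : a (n + N)%N <= q ^+ n * a N.
  elim: n => [|n IH]; first by rewrite add0n mul1r.
  have sn : s (n + N).+1 <= (1 - r) / 2 by apply: sN => /=; lia.
  rewrite addSn exprS -mulrA; apply: (le_trans (step _)).
  apply: le_trans (ler_wpM2l q0 IH); apply: ler_wpM2r => //; rewrite /q; lra.
rewrite -(cvg_shiftn N).
apply: (@squeeze_cvgr _ _ _ _ (cst 0) (fun n => q ^+ n * a N)).
- by near=> n; rewrite a0 geo.
- exact: cvg_cst.
- rewrite -(mul0r (a N)); apply: cvgMl; apply: cvg_expr.
  by rewrite ger0_norm /q //; lra.
Unshelve. all: end_near.
Qed.

Theorem theorem2 (R : realType) (M C : nat)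
  (mu : {measure set (M.-tuple R) -> \bar R}) (D : set (M.-tuple R))
  (f : 'I_C -> M.-tuple R -> R) (Gamma : set (M.-tuple R -> R))
  (g : nat -> M.-tuple R -> R) (r : R) (muL : nat -> R) (l : nat)
  (betaS : nat -> nat -> 'rV[R]_C) :
  is_lebesgue_Rn mu ->
  Rn_compact D -> measurable D ->
  (forall c, isL2 mu D (f c)) ->
  admissible_Gamma Gamma ->
  span_dense mu D Gamma ->
  0 < r < 1 ->
  (forall L, (0 < L)%N -> 0 <= muL L <= 1 - r) ->
  muL @ \oo --> (0 : R) ->
  (0 < l)%N ->
  (forall j, (0 < j)%N -> Gamma (g j)) ->
  (* least-squares output weights after each batch, L = k * l *)
  (forall (k : nat) (beta : nat -> 'rV[R]_C),
     vnorm mu D (resid f g (k * l) (betaS k))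
       <= vnorm mu D (resid f g (k * l) beta)) ->
  (* supervisory inequality for each new batch, L = k * l, k >= 1 *)
  (forall k : nat, (0 < k)%N -> forall c : 'I_C,
     let e := resid f g (k.-1 * l) (betaS k.-1) c in
     exists X : 'M[R]_l,
       @is_MP_pinv R l (@gram R M mu D g (k * l) l) X /\
       ip mu D e (@batch_comb R M g (k * l) l (X *m @gtv R M mu D g (k * l) l e))
         >= (1 - r - muL (k * l)%N) * nsq mu D e) ->
  (fun k => vnorm mu D (resid f g (k * l) (betaS k))) @ \oo --> (0 : R).
Proof.
move=> leb cD mD fL2 admG _ /andP[r_gt0 r_lt1] _ muL0 l_gt0 gG lsq sup.
have Dfin := lebesgue_compact_lty leb cD mD.
have gL2 j : (0 < j)%N -> L2 mu D (g j).
  by move=> /gG; exact: (admissible_L2 mD Dfin admG).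
pose a k := \sum_(c < C) nsq mu D (resid f g (k * l) (betaS k) c).
have a_ge0 k : 0 <= a k by apply: sumr_ge0 => c _; exact: nsq_ge0.
have step k : a k.+1 <= (r + muL (k.+1 * l)%N) * a k.
  rewrite /a mulSnr; apply: (lsq_batch_contraction mD) => // [c|beta|c].
  - exact: (isL2_L2 mD (fL2 c)).
  - by rewrite -mulSnr; exact: lsq.
  - by have := sup k.+1 isT c; rewrite mulSnr opprD addrA.
have a0 : a @ \oo --> 0.
  exact: contraction_cvg0 (ltW r_gt0) r_lt1 a_ge0 (cvg_comp _ _ (cvg_mulnr l l_gt0) muL0) step.
by have := cvg_comp _ _ a0 (@sqrt_continuous R 0); rewrite sqrtr0.
Qed.
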